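(* Let $m, n$ be positive integers with $m \mid n$, let $N < 2^n$ be a positive integer, and let $x < 2^m$ be an odd positive integer. Let $x_{\mathrm{minv}}$ be the inverse of $x$ modulo $2^m$. Define $z_0 = 0$ and, for $j = 0, 1, \ldots, \frac{n-2m}{m}$: $N_j = \lfloor N/2^{jm}\rfloor \bmod 2^m$; $\mathsf{ctrl}_j = \big[x_{\mathrm{minv}}\,(N_j - z_j)\big] \bmod 2^m \in [0, 2^m-1]$; $z'_j = z_j + \mathsf{ctrl}_j \cdot x$; and $z_{j+1} = \lfloor z'_j / 2^m\rfloor$. Then $0 \le z_j < x$ for all $j = 0, 1, \ldots, \frac{n-m}{m}$; $0 \le z'_j < 2^{2m}$ for all $j = 0, 1, \ldots, \frac{n-2m}{m}$; and $\mathsf{ctrl}_j = \lfloor z'_j / x\rfloor$ for all $j = 0, 1, \ldots, \frac{n-2m}{m}$. *)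

From mathcomp Require Import all_boot all_order all_algebra.
Set Implicit Arguments. Unset Strict Implicit. Unset Printing Implicit Defensive.
Import GRing.Theory Num.Theory.

(* All quantities except N_j - z_j are natural numbers; the modular reduction
   of x_minv * (N_j - z_j) is done in the integers (intdiv's %%, which is
   nonnegative for a nonzero modulus), then converted back to nat. *)

Definition Ndigit (m N j : nat) : nat := (N %/ 2 ^ (j * m)) %% 2 ^ m.

Definition ctrl_of (m N xminv j z : nat) : nat :=
  `| ((xminv%:Z * ((Ndigit m N j)%:Z - z%:Z)) %% (2 ^ m)%:Z)%Z |%N.

Definition zprime_of (m N x xminv j z : nat) : nat :=
  z + ctrl_of m N xminv j z * x.

Fixpoint zseq (m N x xminv j : nat) : nat :=
  match j with
  | 0 => 0
  | j'.+1 => zprime_of m N x xminv j' (zseq m N x xminv j') %/ 2 ^ m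
  end.

Definition ctrl (m N x xminv j : nat) : nat :=
  ctrl_of m N xminv j (zseq m N x xminv j).

Definition zprime (m N x xminv j : nat) : nat :=
  zprime_of m N x xminv j (zseq m N x xminv j).

From mathcomp Require Import all_boot all_order all_algebra.
Import GRing.Theory Num.Theory.

(* Every ctrl digit is a residue mod 2^m, so ctrl < 2^m; by induction z_j < x,
   whence z'_j = z_j + ctrl_j x < 2^m x, which gives z_{j+1} < x, z'_j < 2^(2m)
   when x < 2^m, and floor(z'_j / x) = ctrl_j because z_j < x.  None of this
   uses the inverse property of x_minv or the bounds on N and j. *)

Lemma ltn_add_mull (z c x b : nat) : z < x -> c < b -> z + c * x < b * x.
Proof.
move=> zx cb; apply: (@leq_trans (c.+1 * x)).
  by rewrite mulSn ltn_add2r.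
by rewrite leq_mul2r cb orbT.
Qed.

Lemma ctrl_of_lt (m N xminv j z : nat) : ctrl_of m N xminv j z < 2 ^ m.
Proof.
rewrite /ctrl_of; set a := (_ * _)%R.
have pos2m : (0 < (2 ^ m)%:Z)%R by rewrite ltz_nat expn_gt0.
have := modz_ge0 a (lt0r_neq0 pos2m); have := ltz_pmod a pos2m.
by case: (a %% _)%Z.
Qed.

Section Digits.

Variables (m N x xminv : nat).
Hypothesis x_gt0 : 0 < x.

Lemma zprime_of_lt (j : nat) {z : nat} : z < x -> zprime_of m N x xminv j z < 2 ^ m * x.
Proof. by move=> zx; apply/ltn_add_mull/ctrl_of_lt. Qed.

Lemma zseq_lt (j : nat) : zseq m N x xminv j < x.
Proof.
elim: j => [|j IHj] //=.
by rewrite ltn_divLR ?expn_gt0 // mulnC zprime_of_lt.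
Qed.

Lemma zprime_lt (j : nat) : x < 2 ^ m -> zprime m N x xminv j < 2 ^ (2 * m).
Proof.
move=> x_lt; rewrite /zprime; apply: (leq_trans (zprime_of_lt j (zseq_lt j))).
by rewrite mul2n -addnn expnD leq_mul2l ltnW ?orbT.
Qed.

Lemma ctrl_eq_div (j : nat) : ctrl m N x xminv j = zprime m N x xminv j %/ x.
Proof. by rewrite /zprime /zprime_of addnC divnMDl // divn_small ?addn0 ?zseq_lt. Qed.

End Digits.

Theorem proposition4p4 (m n N x xminv : nat) :
  0 < m -> 0 < n -> m %| n ->
  0 < N -> N < 2 ^ n ->
  0 < x -> x < 2 ^ m -> odd x ->
  xminv < 2 ^ m -> x * xminv = 1 %[mod 2 ^ m] ->
  (forall j, j.+1 * m <= n -> zseq m N x xminv j < x) /\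
  (forall j, j.+2 * m <= n -> zprime m N x xminv j < 2 ^ (2 * m)) /\
  (forall j, j.+2 * m <= n -> ctrl m N x xminv j = zprime m N x xminv j %/ x).
Proof.
move=> _ _ _ _ _ x_gt0 x_lt _ _ _.
split; last split=> j _.
- by move=> j _; apply: zseq_lt.
- exact: zprime_lt.
- exact: ctrl_eq_div.
Qed.
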